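(* Let $S$ be a left handed skew lattice. Then $S$ satisfies the identities $x\wedge y\wedge((x\vee y)\wedge z)=x\wedge y\wedge z$ and $x\vee y\vee z=x\vee(y\wedge z)\vee y\vee z$. If moreover $S$ is strongly distributive or co-strongly distributive, then $S$ also satisfies $(x\wedge y)\vee((x\vee y)\wedge z)=(x\vee(y\wedge z))\wedge(y\vee z)$, and hence $S$ is a strong distributive solution of the Yang–Baxter equation.
   Context: A skew lattice is a set $S$ with two binary operations $\wedge,\vee$, each idempotent and associative, satisfying the absorption laws $x\wedge(x\vee y)=x=x\vee(x\wedge y)$ and $(x\wedge y)\vee y=y=(x\vee y)\wedge y$ for all $x,y\in S$. $S$ is left handed if $x\wedge y\wedge x=x\wedge y$ for all $x,y$ (equivalently $x\vee y\vee x=y\vee x$). $S$ is strongly distributive if it satisfies $(x\vee y)\wedge z=(x\wedge z)\vee(y\wedge z)$ and $x\wedge(y\vee z)=(x\wedge y)\vee(x\wedge z)$; it is co-strongly distributive if it satisfies $(x\wedge y)\vee z=(x\vee z)\wedge(y\vee z)$ and $x\vee(y\wedge z)=(x\vee y)\wedge(x\vee z)$. A skew lattice $S$ is a strong distributive solution if the map $r(x,y)=(x\wedge y,x\vee y)$ on $S\times S$ satisfies $(r\times\mathrm{id})\circ(\mathrm{id}\times r)\circ(r\times\mathrm{id})=(\mathrm{id}\times r)\circ(r\times\mathrm{id})\circ(\mathrm{id}\times r)$. *)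

Definition skew_lattice {S : Type} (meet join : S -> S -> S) : Prop :=
  (forall x, meet x x = x) /\ (forall x, join x x = x) /\
  (forall x y z, meet x (meet y z) = meet (meet x y) z) /\
  (forall x y z, join x (join y z) = join (join x y) z) /\
  (forall x y, meet x (join x y) = x) /\
  (forall x y, join x (meet x y) = x) /\
  (forall x y, join (meet x y) y = y) /\
  (forall x y, meet (join x y) y = y).

Definition left_handed {S : Type} (meet join : S -> S -> S) : Prop :=
  forall x y, meet (meet x y) x = meet x y.

Definition strongly_distributive {S : Type} (meet join : S -> S -> S) : Prop :=
  (forall x y z, meet (join x y) z = join (meet x z) (meet y z)) /\
  (forall x y z, meet x (join y z) = join (meet x y) (meet x z)).

Definition co_strongly_distributive {S : Type} (meet join : S -> S -> S) : Prop :=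
  (forall x y z, join (meet x y) z = meet (join x z) (join y z)) /\
  (forall x y z, join x (meet y z) = meet (join x y) (join x z)).

Definition sl_r {S : Type} (meet join : S -> S -> S) (p : S * S) : S * S :=
  (meet (fst p) (snd p), join (fst p) (snd p)).

Definition r12 {S : Type} (r : S * S -> S * S) (t : S * S * S) : S * S * S :=
  let '(a, b, c) := t in let '(a', b') := r (a, b) in (a', b', c).

Definition r23 {S : Type} (r : S * S -> S * S) (t : S * S * S) : S * S * S :=
  let '(a, b, c) := t in let '(b', c') := r (b, c) in (a, b', c').

Definition strong_distributive_solution {S : Type} (meet join : S -> S -> S) : Prop :=
  let r := sl_r meet join in
  forall t : S * S * S, r12 r (r23 r (r12 r t)) = r23 r (r12 r (r23 r t)).

From Stdlib Require Import Setoid.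

Set Implicit Arguments.

(* Two consequences of the
   absorption laws and left handedness drive everything:
     (a) x ⊓ y ⊓ (x ⊔ y) = x ⊓ y, which gives the first identity
         x ⊓ y ⊓ ((x ⊔ y) ⊓ z) = x ⊓ y ⊓ z by associativity;
     (b) y ⊓ z ⊔ y = y, which gives the second identity
         x ⊔ y ⊔ z = x ⊔ (y ⊓ z) ⊔ y ⊔ z by associativity.
   The third identity x ⊓ y ⊔ ((x ⊔ y) ⊓ z) = (x ⊔ (y ⊓ z)) ⊓ (y ⊔ z) is
   proved separately under strong distributivity (expanding both sides
   and using (a)) and under co-strong distributivity (using in addition
   the dual left handedness x ⊔ y ⊔ x = y ⊔ x).  Finally, computing both
   sides of the braid relation for r(x,y) = (x ⊓ y, x ⊔ y) on a triple
   (a, b, c), the three coordinates agree by exactly the three identities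
   (up to associativity), so the map r is a strong distributive solution. *)

Section LeftHandedSkewLattice.

Variables (S : Type) (meet join : S -> S -> S).
Hypothesis skew : skew_lattice meet join.
Hypothesis left_hand : left_handed meet join.

Local Infix "⊓" := meet (at level 40, left associativity).
Local Infix "⊔" := join (at level 50, left associativity).

Lemma join_idem (x : S) : x ⊔ x = x.
Proof. apply skew. Qed.

Lemma meet_assoc (x y z : S) : x ⊓ (y ⊓ z) = x ⊓ y ⊓ z.
Proof. apply skew. Qed.

Lemma join_assoc (x y z : S) : x ⊔ (y ⊔ z) = x ⊔ y ⊔ z.
Proof. apply skew. Qed.

Lemma meet_join_absorb (x y : S) : x ⊓ (x ⊔ y) = x.
Proof. apply skew. Qed.

Lemma meet_join_absorb_r (x y : S) : x ⊓ y ⊔ y = y.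
Proof. apply skew. Qed.

Lemma join_meet_absorb_r (x y : S) : (x ⊔ y) ⊓ y = y.
Proof. apply skew. Qed.

Lemma meet_meet_join (x y : S) : x ⊓ y ⊓ (x ⊔ y) = x ⊓ y.
Proof.
  rewrite <- (left_hand x y) at 1.
  rewrite <- meet_assoc, meet_join_absorb.
  apply left_hand.
Qed.

Lemma join_meet_left (y z : S) : y ⊓ z ⊔ y = y.
Proof. rewrite <- (left_hand y z) at 1. apply meet_join_absorb_r. Qed.

Lemma join_left_handed (x y : S) : x ⊔ y ⊔ x = y ⊔ x.
Proof.
  assert (x_below : x ⊓ (y ⊔ x) = x).
  { rewrite <- (join_meet_absorb_r y x) at 1.
    rewrite left_hand. apply join_meet_absorb_r. }
  rewrite <- join_assoc. rewrite <- x_below at 1.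
  apply meet_join_absorb_r.
Qed.

Lemma meet_identity (x y z : S) : x ⊓ y ⊓ ((x ⊔ y) ⊓ z) = x ⊓ y ⊓ z.
Proof. rewrite meet_assoc, meet_meet_join. reflexivity. Qed.

Lemma join_identity (x y z : S) : x ⊔ y ⊔ z = x ⊔ (y ⊓ z) ⊔ y ⊔ z.
Proof. rewrite <- (join_assoc x (y ⊓ z) y), join_meet_left. reflexivity. Qed.

Definition mixed_identity : Prop :=
  forall x y z : S, x ⊓ y ⊔ ((x ⊔ y) ⊓ z) = (x ⊔ (y ⊓ z)) ⊓ (y ⊔ z).

Lemma mixed_identity_strongly_distributive :
  strongly_distributive meet join -> mixed_identity.
Proof.
  intros [distr_r distr_l] x y z.
  rewrite distr_r, distr_r, join_assoc, <- distr_l, meet_meet_join.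
  reflexivity.
Qed.

Lemma mixed_identity_co_strongly_distributive :
  co_strongly_distributive meet join -> mixed_identity.
Proof.
  intros [codistr_r codistr_l] x y z.
  rewrite codistr_r, !codistr_l, !join_assoc, !join_idem, join_left_handed.
  rewrite meet_assoc, left_hand.
  reflexivity.
Qed.

(* Coordinatewise, the braid relation for r is the first identity, the
   mixed identity and the second identity. *)
Lemma strong_distributive_solution_of_mixed_identity :
  mixed_identity -> strong_distributive_solution meet join.
Proof.
  intros mixed [[a b] c]. cbn.
  rewrite meet_identity, mixed, meet_assoc, (join_identity a b c), <- !join_assoc.
  reflexivity.
Qed.

End LeftHandedSkewLattice.

Theorem mainTheorem7 (S : Type) (meet join : S -> S -> S) :
  skew_lattice meet join -> left_handed meet join ->
  (forall x y z, meet (meet x y) (meet (join x y) z) = meet (meet x y) z) /\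
  (forall x y z, join (join x y) z = join (join (join x (meet y z)) y) z) /\
  (strongly_distributive meet join \/ co_strongly_distributive meet join ->
     (forall x y z, join (meet x y) (meet (join x y) z)
                    = meet (join x (meet y z)) (join y z)) /\
     strong_distributive_solution meet join).
Proof.
  intros skew left_hand.
  split; [exact (meet_identity skew left_hand) |].
  split; [exact (join_identity skew left_hand) |].
  intros distributive.
  assert (mixed : mixed_identity meet join).
  { destruct distributive as [sd | csd].
    - exact (mixed_identity_strongly_distributive skew left_hand sd).
    - exact (mixed_identity_co_strongly_distributive skew left_hand csd). }
  split; [exact mixed |].
  exact (strong_distributive_solution_of_mixed_identity skew left_hand mixed).
Qed.
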